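(* Let $\mathbb{F}$ be a finite field and $n\ge2$. Let $j_1,\dots,j_{n-1}\in\{1,\dots,n\}$ be pairwise different and $d_1,\dots,d_{n-1}\in\mathbb{N}_0$ be such that $j_i<i$ implies $d_i>0$. Then there exists a basic matrix $M=(m_{ij})\in\mathbb{F}[t]^{(n-1)\times n}$ with the following properties, for all $i=1,\dots,n-1$: (i) $\deg m_{ij}\le d_i$ for $j<j_i$; (ii) $\deg m_{ij}=d_i$ for $j=j_i$; (iii) $\deg m_{ij}<d_i$ for $j>j_i$; (iv) $m_{ii}(0)=1$; (v) $m_{ij}(0)=0$ for $j<i$.
   Context: A matrix $M\in\mathbb{F}[t]^{k\times n}$ is basic if $\mathrm{rank}\,M(\lambda)=k$ for all $\lambda$ in an algebraic closure of $\mathbb{F}$, equivalently its $k\times k$ minors are coprime. $\deg 0=-\infty$. *)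

From HB Require Import structures.
From mathcomp Require Import all_boot all_order all_algebra all_field.
Set Implicit Arguments. Unset Strict Implicit. Unset Printing Implicit Defensive.
Import GRing.Theory.
Local Open Scope ring_scope.

(* The k x k minors of a k x n polynomial matrix: determinants of the
   k x k submatrices obtained by choosing k columns (non-injective choices
   give zero determinants, which is harmless for coprimality). *)
Definition maximal_minor (F : fieldType) (k n : nat)
  (M : 'M[{poly F}]_(k, n)) (f : 'I_k -> 'I_n) : {poly F} :=
  \det (colsub f M).

Definition basic (F : fieldType) (k n : nat) (M : 'M[{poly F}]_(k, n)) : Prop :=
  forall p : {poly F},
    (forall f : 'I_k -> 'I_n, p %| maximal_minor M f) -> size p = 1%N.

(* Extend the pivot map j to a permutation s of the columns by sending the
   last index n-1, which has no row, to the column missed by j.  Row i of M is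
   t^(d_i) in column j_i plus 1 in the diagonal column i, so M(0) is upper
   unitriangular; but a cycle of s of positive total degree would still yield
   a non-constant minor.  Call a column a leader if it is the largest element
   of its s-cycle and is either n-1 or a row of positive degree, and give each
   leader row a further 1 in the column of the next larger leader.  Choosing
   for each row i the next leader if i is a leader, and column i otherwise,
   gives a square submatrix which is triangular with unit diagonal once its
   rows are ordered by (largest element of the cycle, reversed position along
   the cycle).  Hence this maximal minor is 1 and M is basic.  *)

From HB Require Import structures.
From mathcomp Require Import all_boot all_order all_algebra all_field all_fingroup.
From mathcomp Require Import zify.
Set Implicit Arguments. Unset Strict Implicit. Unset Printing Implicit Defensive.
Import GRing.Theory.

Section CycleMax.

Variables (n : nat) (s : 'I_n -> 'I_n).
Hypothesis s_inj : injective s.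

Definition cycle_max k : 'I_n := [arg max_(x > k | fconnect s k x) (x : nat)].

Definition cycle_pos k := findex s (cycle_max k) k.

(* The pair (cycle_max k, n - cycle_pos k), ordered lexicographically. *)
Definition cycle_rank k := n * cycle_max k + (n - cycle_pos k).

Lemma fconnect_cycle_max k : fconnect s k (cycle_max k).
Proof. by rewrite /cycle_max; case: arg_maxnP => //; apply: connect0. Qed.

Lemma leq_cycle_max k x : fconnect s k x -> x <= cycle_max k.
Proof. by rewrite /cycle_max; case: arg_maxnP => [|y _]; [apply: connect0 | apply]. Qed.

Lemma cycle_max_ge (k : 'I_n) : k <= cycle_max k.
Proof. exact/leq_cycle_max/connect0. Qed.

Lemma cycle_max_fconnect k x : fconnect s k x -> cycle_max x = cycle_max k.
Proof.
move=> kx; have xk : fconnect s x k by rewrite (fconnect_sym s_inj).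
apply/val_inj/eqP; rewrite eqn_leq !leq_cycle_max //.
  exact: connect_trans xk (fconnect_cycle_max k).
exact: connect_trans kx (fconnect_cycle_max x).
Qed.

Lemma cycle_max_step k : cycle_max (s k) = cycle_max k.
Proof. exact/cycle_max_fconnect/fconnect1. Qed.

Lemma cycle_max_succ_ge k : s k <= cycle_max k.
Proof. by rewrite -cycle_max_step cycle_max_ge. Qed.

Lemma cycle_max_fix k : s k = k -> cycle_max k = k.
Proof.
move=> sk; have iter_k i : iter i s k = k by elim: i => //= i ->.
by rewrite -(iter_findex (fconnect_cycle_max k)) iter_k.
Qed.

Lemma cycle_pos_lt k : cycle_pos k < n.
Proof.
have ck : fconnect s (cycle_max k) k by rewrite (fconnect_sym s_inj) fconnect_cycle_max.
by rewrite -[n]card_ord (leq_trans (findex_max ck)) ?max_card.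
Qed.

Lemma cycle_pos_step k : s k != cycle_max k -> cycle_pos (s k) = (cycle_pos k).+1.
Proof.
move=> sk_neq; rewrite /cycle_pos cycle_max_step; set c := cycle_max k.
have ck : fconnect s c k by rewrite (fconnect_sym s_inj) fconnect_cycle_max.
have -> : s k = iter (findex s c k).+1 s c by rewrite iterS iter_findex.
rewrite findex_iter // ltn_neqAle findex_max // andbT.
apply: contraNneq sk_neq => ord_eq.
by rewrite -[in X in X == _](iter_findex ck) -iterS ord_eq iter_order.
Qed.

Lemma cycle_rank_lt_max x y :
  cycle_max x < cycle_max y -> cycle_rank x < cycle_rank y.
Proof.
move=> lt_xy; have pos_y := cycle_pos_lt y.
have : n * (cycle_max x).+1 <= n * cycle_max y by rewrite leq_mul2l lt_xy orbT.
rewrite /cycle_rank mulnS; lia.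
Qed.

Lemma cycle_rank_step k : s k != cycle_max k -> cycle_rank (s k) < cycle_rank k.
Proof.
move=> sk_neq; have pos_sk := cycle_pos_lt (s k).
rewrite /cycle_rank cycle_max_step cycle_pos_step // in pos_sk *; lia.
Qed.

End CycleMax.

Section NextIn.

Variables (n : nat) (K : pred 'I_n.+1).
Hypothesis K_max : K ord_max.

Definition next_in (k : 'I_n.+1) : 'I_n.+1 :=
  [arg min_(x < ord_max | K x && (k < x)) (x : nat)].

Lemma next_inP k : k != ord_max ->
  [/\ K (next_in k), k < next_in k & forall x, K x -> k < x -> next_in k <= x].
Proof.
move=> k_neq; rewrite /next_in; case: arg_minnP => [|x /andP[Kx lt_kx] min_x].
  by rewrite K_max ltn_neqAle -ltnS ltn_ord andbT -val_eqE in k_neq *.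
by split=> // y Ky lt_ky; apply: min_x; rewrite Ky.
Qed.

Lemma next_in_inj a b : a != ord_max -> b != ord_max -> K a -> K b ->
  next_in a = next_in b -> a = b.
Proof.
wlog lt_ab : a b / a < b => [hwlog a_neq b_neq Ka Kb eq_ab|a_neq b_neq _ Kb].
  case: (ltngtP a b) => [/hwlog|/hwlog|/val_inj//]; first exact.
  by move=> /(_ b_neq a_neq Kb Ka (esym eq_ab)).
have [_ _ min_a] := next_inP a_neq; have [_ lt_b _] := next_inP b_neq.
by move=> eq_ab; have := min_a b Kb lt_ab; rewrite eq_ab leqNgt lt_b.
Qed.

End NextIn.

Lemma notin_codom_exists (T T' : finType) (f : T -> T') :
  injective f -> #|T| < #|T'| -> exists y, y \notin codom f.
Proof.
move=> f_inj lt_card; have /card_gt0P[y] : 0 < #|[predC codom f]|.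
  by rewrite -(ltn_add2l #|codom f|) cardC addn0 card_codom.
by exists y.
Qed.

Lemma ord_ltn_eqF n (x y : 'I_n) : x < y -> (x == y) = false.
Proof. by move=> lt_xy; rewrite -val_eqE ltn_eqF. Qed.

Lemma ord_gtn_eqF n (x y : 'I_n) : y < x -> (x == y) = false.
Proof. by move=> lt_yx; rewrite -val_eqE gtn_eqF. Qed.

Section MaximalMinors.

Local Open Scope ring_scope.

Lemma det_rank_trig (R : comNzRingType) k (A : 'M[R]_k) (rank : 'I_k -> nat) :
    (forall i l, l != i -> A i l != 0 -> (rank l < rank i)%N) ->
  \det A = \prod_i A i i.
Proof.
move=> A_trig; rewrite /determinant (bigD1 1%g) //= odd_perm1 expr0 mul1r.
rewrite [X in _ + X]big1 ?addr0 => [|s s_neq1].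
  by apply: eq_bigr => i _; rewrite perm1.
have [[i /eqP Ai0]|A_nz] := altP (@existsP _ (fun i => A i (s i) == 0)).
  by rewrite (bigD1 i) //= Ai0 mul0r mulr0.
(* A permutation s with all A i (s i) nonzero never raises the rank, and lowers
   it where it moves an index: impossible, as the total rank is preserved. *)
exfalso; have [i si_neq] : exists i, s i != i.
  apply/existsP; apply: contraR s_neq1 => /existsPn s_id.
  by apply/eqP/permP => x; rewrite perm1; apply/eqP; rewrite -[_ == _]negbK s_id.
have le_rank x : (rank (s x) <= rank x)%N.
  have [->//|sx_neq] := eqVneq (s x) x.
  by apply/ltnW/A_trig/(existsPn A_nz x).
have : (\sum_x rank (s x) < \sum_x rank x)%N.
  rewrite (bigD1 i) //= [X in (_ < X)%N](bigD1 i) //= -addSn leq_add //.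
    exact/A_trig/(existsPn A_nz i).
  exact: leq_sum.
by rewrite [X in (_ < X)%N](reindex_inj (@perm_inj _ s)) ltnn.
Qed.

Lemma basic_of_const_minor (F : fieldType) k n (M : 'M[{poly F}]_(k, n)) f :
  size (maximal_minor M f) = 1%N -> basic M.
Proof.
move=> size_minor p /(_ f) p_dvd.
have minor_neq0 : maximal_minor M f != 0 by rewrite -size_poly_eq0 size_minor.
have p_neq0 : p != 0 by apply: contraNneq minor_neq0 => p0; rewrite -dvd0p -p0.
by apply/eqP; rewrite eqn_leq -{1}size_minor dvdp_leq //= size_poly_gt0.
Qed.

End MaximalMinors.

Section Construction.

Variables (F : fieldType) (N : nat) (j : 'I_N -> 'I_N.+1) (d : 'I_N -> nat).
Variable m : 'I_N.+1.
Hypotheses (j_inj : injective j) (m_notin : m \notin codom j).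
Hypothesis d_gt0 : forall i, j i < i -> 0 < d i.

Local Notation dcol i := (widen_ord (leq_pred N.+1) i).

Lemma dcol_lift i : dcol i = lift ord_max i.
Proof. by apply: val_inj; rewrite /= /bump leqNgt ltn_ord. Qed.

Lemma unlift_dcol i : unlift ord_max (dcol i) = Some i.
Proof. by rewrite dcol_lift liftK. Qed.

Lemma dcol_neq_max i : dcol i != ord_max.
Proof. by rewrite dcol_lift eq_sym neq_lift. Qed.

Lemma dcol_inj : injective (fun i : 'I_N => dcol i).
Proof. by move=> a b eq_ab; apply: val_inj; apply: (congr1 val eq_ab). Qed.

Definition pivot_perm k := if unlift ord_max k is Some i then j i else m.

Definition ext_deg k := if unlift ord_max k is Some i then d i else 0.

Lemma pivot_perm_dcol i : pivot_perm (dcol i) = j i.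
Proof. by rewrite /pivot_perm unlift_dcol. Qed.

Lemma pivot_perm_inj : injective pivot_perm.
Proof.
have j_neq_m i : j i != m by apply: contraNneq m_notin => <-; apply: codom_f.
rewrite /pivot_perm => x y.
case: unliftP => [x'|] ->; case: unliftP => [y'|] -> //.
- by move/j_inj->.
- by move/eqP; rewrite (negPf (j_neq_m x')).
- by move/esym/eqP; rewrite (negPf (j_neq_m y')).
Qed.

Local Notation cmax := (cycle_max pivot_perm).

Definition leader k := (cmax k == k) && ((k == ord_max) || (0 < ext_deg k)).

Lemma leader_max : leader ord_max.
Proof.
rewrite /leader eqxx orTb andbT; apply/eqP/val_inj/eqP.
by rewrite eqn_leq cycle_max_ge -ltnS ltn_ord.
Qed.

Lemma leader_dcol i : leader (dcol i) = (cmax (dcol i) == dcol i) && (0 < d i).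
Proof. by rewrite /leader (negPf (dcol_neq_max i)) /ext_deg unlift_dcol. Qed.

Lemma leader_cycle_max k : leader k -> cmax k = k.
Proof. by case/andP=> /eqP. Qed.

Lemma pivot_le_cycle_max i : cmax (dcol i) = dcol i -> j i <= dcol i.
Proof.
move=> cmax_i; rewrite -cmax_i -pivot_perm_dcol.
exact/cycle_max_succ_ge/pivot_perm_inj.
Qed.

Lemma leader_pivot_le i : leader (dcol i) -> j i <= dcol i.
Proof. by move/leader_cycle_max/pivot_le_cycle_max. Qed.

Lemma leader_deg_gt0 i : leader (dcol i) -> 0 < d i.
Proof. by rewrite leader_dcol => /andP[]. Qed.

Lemma nonleader_cycle_max i : cmax (dcol i) = dcol i -> ~~ leader (dcol i) ->
  j i = dcol i /\ d i = 0.
Proof.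
rewrite leader_dcol => cmax_i; rewrite cmax_i eqxx /= -eqn0Ngt => /eqP d0.
split=> //; apply/val_inj/eqP; rewrite eqn_leq.
by rewrite pivot_le_cycle_max // leqNgt; apply/negP => /d_gt0; rewrite d0.
Qed.

Definition next_leader := next_in leader.

Lemma next_leaderP i :
  leader (next_leader (dcol i)) /\ dcol i < next_leader (dcol i).
Proof. by have [] := next_inP leader_max (dcol_neq_max i). Qed.

Lemma next_leader_gt_pivot i : leader (dcol i) -> j i < next_leader (dcol i).
Proof. by move/leader_pivot_le/leq_ltn_trans; apply; case: (next_leaderP i). Qed.

Local Open Scope ring_scope.

(* The diagonal 1 is omitted when it would add to a pivot 'X^0, which could
   give the entry 1 + 1 = 0 in characteristic 2. *)
Definition pivot_mx : 'M[{poly F}]_(N, N.+1) := \matrix_(i, k)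
  ((if k == j i then 'X^(d i) else 0) +
   (if (k == dcol i) && ((k != j i) || (0 < d i)%N) then 1 else 0) +
   (if leader (dcol i) && (k == next_leader (dcol i)) then 1 else 0)).

Lemma size_if_1_0 (b : bool) : (size (if b then 1%R else 0%R : {poly F}) <= 1)%N.
Proof. by case: b; rewrite ?size_poly1 ?size_poly0. Qed.

Lemma size_pivot_mx_nonpivot i (k : 'I_N.+1) :
  k != j i -> (size (pivot_mx i k) <= 1)%N.
Proof.
move=> /negPf k_neq; rewrite mxE k_neq add0r (leq_trans (size_polyD _ _)) //.
by rewrite geq_max !size_if_1_0.
Qed.

Lemma size_pivot_mx_lt i (k : 'I_N.+1) :
  (k < j i)%N -> (size (pivot_mx i k) <= (d i).+1)%N.
Proof.
by move=> lt_k; rewrite (leq_trans (size_pivot_mx_nonpivot _)) // neq_ltn lt_k.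
Qed.

Lemma size_pivot_mx_pivot i : size (pivot_mx i (j i)) = (d i).+1.
Proof.
rewrite mxE eqxx /=.
have -> : leader (dcol i) && (j i == next_leader (dcol i)) = false.
  by apply/negP => /andP[/next_leader_gt_pivot/ord_ltn_eqF->].
rewrite addr0; case: ifP => [/andP[_ d_pos]|_]; last by rewrite addr0 size_polyXn.
by rewrite size_polyDl ?size_polyXn // size_poly1 ltnS.
Qed.

Lemma size_pivot_mx_gt i (k : 'I_N.+1) :
  (j i < k)%N -> (size (pivot_mx i k) <= d i)%N.
Proof.
move=> lt_k; have [d0|d_pos] := posnP (d i); last first.
  by rewrite (leq_trans (size_pivot_mx_nonpivot _)) // neq_ltn lt_k orbT.
have k_neq : k != dcol i.
  by apply: contraTneq lt_k => ->; apply/negP => /d_gt0; rewrite d0.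
have nonleader : ~~ leader (dcol i) by apply/negP => /leader_deg_gt0; rewrite d0.
rewrite mxE [k == j i]ord_gtn_eqF // (negPf k_neq) (negPf nonleader) d0 /=.
by rewrite !addr0 size_poly0.
Qed.

Lemma horner_pivot_mx_diag i : (pivot_mx i (dcol i)).[0] = 1.
Proof.
rewrite mxE eqxx.
have -> : leader (dcol i) && (dcol i == next_leader (dcol i)) = false.
  by apply/negP => /andP[_]; rewrite ord_ltn_eqF //; case: (next_leaderP i).
rewrite addr0 hornerD; have [ji|ne] := eqVneq (dcol i) (j i).
  have [d0|d_pos] := posnP (d i); first by rewrite d0 /= !hornerE.
  by rewrite /= hornerXn expr0n gtn_eqF // !hornerE.
by rewrite /= !hornerE.
Qed.

Lemma horner_pivot_mx_lt (i : 'I_N) (k : 'I_N.+1) :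
  (k < i)%N -> (pivot_mx i k).[0] = 0.
Proof.
move=> lt_k; rewrite mxE [k == dcol i]ord_ltn_eqF //.
have -> : leader (dcol i) && (k == next_leader (dcol i)) = false.
  apply/negP => /andP[_]; rewrite ord_ltn_eqF //.
  by apply: ltn_trans lt_k _; case: (next_leaderP i).
rewrite andFb !addr0; case: eqP => [kj|_]; last by rewrite horner0.
by rewrite hornerXn expr0n gtn_eqF // d_gt0 // -kj.
Qed.

Lemma pivot_mx_neq0 i k : pivot_mx i k != 0 ->
  [\/ k = j i, k = dcol i | leader (dcol i) /\ k = next_leader (dcol i)].
Proof.
have [->|k_neq_piv] := eqVneq k (j i); first by constructor 1.
have [->|k_neq_diag] := eqVneq k (dcol i); first by constructor 2.
have [/andP[lead_i /eqP ->]|not_next] :=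
  boolP (leader (dcol i) && (k == next_leader (dcol i))); first by constructor 3.
by rewrite mxE (negPf k_neq_piv) (negPf k_neq_diag) (negPf not_next) !addr0 eqxx.
Qed.

Lemma cycle_max_pivot_fix i : j i = dcol i -> cmax (dcol i) = dcol i.
Proof. by move=> ji; apply: cycle_max_fix; rewrite pivot_perm_dcol. Qed.

Lemma cycle_max_next_leader_gt (i : 'I_N) :
  leader (dcol i) -> (cmax (dcol i) < cmax (next_leader (dcol i)))%N.
Proof.
move=> lead_i; have [lead_next lt_i] := next_leaderP i.
by rewrite (leader_cycle_max lead_i) (leader_cycle_max lead_next).
Qed.

Definition minor_col i := if leader (dcol i) then next_leader (dcol i) else dcol i.

Definition minor_rank i := cycle_rank pivot_perm (dcol i).

Lemma minor_col_inj : injective minor_col.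
Proof.
move=> a b; rewrite /minor_col.
case: ifP => lead_a; case: ifP => lead_b; last exact: dcol_inj.
- move/(next_in_inj leader_max (dcol_neq_max a) (dcol_neq_max b) lead_a lead_b).
  exact: dcol_inj.
- by move=> eq_ab; have [] := next_leaderP a; rewrite eq_ab lead_b.
- by move=> eq_ab; have [] := next_leaderP b; rewrite -eq_ab lead_a.
Qed.

Lemma pivot_mx_minor_col i : pivot_mx i (minor_col i) = 1.
Proof.
rewrite /minor_col; have [lead_i|nonlead_i] := boolP (leader (dcol i)); rewrite mxE.
  have [_ lt_i] := next_leaderP i.
  rewrite [_ == j i]ord_gtn_eqF ?next_leader_gt_pivot //.
  by rewrite [_ == dcol i]ord_gtn_eqF // eqxx lead_i !add0r.
rewrite eqxx (negPf nonlead_i) /= addr0.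
have [ji|] := eqVneq (dcol i) (j i); last by rewrite add0r.
have [_ ->] := nonleader_cycle_max (cycle_max_pivot_fix (esym ji)) nonlead_i.
by rewrite addr0.
Qed.

Lemma minor_rank_lt (i l : 'I_N) :
  l != i -> pivot_mx i (minor_col l) != 0 -> (minor_rank l < minor_rank i)%N.
Proof.
move=> l_neq /pivot_mx_neq0[|col_diag|[lead_i col_next]]; rewrite /minor_rank.
- rewrite /minor_col; case: ifP => lead_l col_piv.
    apply: (cycle_rank_lt_max pivot_perm_inj).
    rewrite -[cmax (dcol i)](cycle_max_step pivot_perm_inj) pivot_perm_dcol.
    by rewrite -col_piv cycle_max_next_leader_gt.
  rewrite col_piv -pivot_perm_dcol; apply: (cycle_rank_step pivot_perm_inj).
  apply/eqP=> piv_max.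
  have cmax_l : cmax (dcol l) = dcol l.
    by rewrite col_piv -pivot_perm_dcol (cycle_max_step pivot_perm_inj) -piv_max.
  have [jl _] := nonleader_cycle_max cmax_l (negbT lead_l).
  by move: l_neq; rewrite (j_inj (etrans jl col_piv)) eqxx.
- move: col_diag; rewrite /minor_col; case: ifP => lead_l; last first.
    by move/dcol_inj=> li; rewrite li eqxx in l_neq.
  move=> col_eq; apply: (cycle_rank_lt_max pivot_perm_inj).
  by rewrite -col_eq cycle_max_next_leader_gt.
- have : minor_col l = minor_col i by rewrite col_next /minor_col lead_i.
  by move/minor_col_inj=> li; rewrite li eqxx in l_neq.
Qed.

Lemma det_pivot_minor : maximal_minor pivot_mx minor_col = 1.
Proof.
rewrite /maximal_minor (@det_rank_trig _ _ _ minor_rank) => [|i l]; last first.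
  by rewrite mxE; apply: minor_rank_lt.
by apply: big1 => i _; rewrite mxE pivot_mx_minor_col.
Qed.

Lemma pivot_mx_basic : basic pivot_mx.
Proof.
by apply: (@basic_of_const_minor _ _ _ _ minor_col); rewrite det_pivot_minor size_poly1.
Qed.

End Construction.

Local Open Scope ring_scope.

Theorem theorem4p7 (F : finFieldType) (n : nat) (hn : (2 <= n)%N)
  (j : 'I_n.-1 -> 'I_n) (d : 'I_n.-1 -> nat)
  (hj : injective j)
  (hd : forall i : 'I_n.-1, (j i < i)%N -> (0 < d i)%N) :
  exists M : 'M[{poly F}]_(n.-1, n),
    basic M /\
    forall i : 'I_n.-1,
      [/\ forall k : 'I_n, (k < j i)%N -> (size (M i k) <= (d i).+1)%N,
          size (M i (j i)) = (d i).+1,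
          forall k : 'I_n, (j i < k)%N -> (size (M i k) <= d i)%N,
          (M i (widen_ord (leq_pred n) i)).[0] = 1
        & forall k : 'I_n, (k < i)%N -> (M i k).[0] = 0].
Proof.
case: n hn j d hj hd => [//|N] _ j d hj hd.
have [m m_notin] : exists m, m \notin codom j.
  by apply: notin_codom_exists hj _; rewrite !card_ord.
exists (pivot_mx F j d m); split=> [|i]; first exact: pivot_mx_basic.
split.
- exact: size_pivot_mx_lt.
- exact: size_pivot_mx_pivot.
- exact: size_pivot_mx_gt.
- exact: horner_pivot_mx_diag.
- exact: horner_pivot_mx_lt.
Qed.
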